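(* Let $k$ be an algebraically closed field of characteristic $0$ and $d\ge3$. For each integer $m\ge1$ let $V_m$ have basis $v_1,\dots,v_m$ with symmetric $d$-linear form $\Theta_d(v_{i_1},\dots,v_{i_d})=1$ if $i_1+\dots+i_d=(d-1)m+1$ and $0$ otherwise, let $\mathcal{L}(m,d)=\{L\in\mathfrak{gl}(V_m):\sum_{i=1}^d\Theta_d(u_1,\dots,L(u_i),\dots,u_d)=0\ \forall u_j\in V_m\}$, and let $D_m(v_i)=(m-1-d(m-i))v_i$. For $n\ge2$ let $\iota:V_n\to V_{n+1}$, $\iota(v_i)=v_i$, $\pi:V_{n+1}\to V_n$, $\pi(v_i)=v_{i-1}$ (with $v_0=0$), and $\rho(f)=\iota\circ f\circ\pi$. Then for every $n\ge2$, $\mathcal{L}(n+1,d)=\rho(\mathcal{L}(n,d))\oplus kD_{n+1}$ and $\dim_k\mathcal{L}(n,d)=n-1$. *)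

From HB Require Import structures.
From mathcomp Require Import all_boot all_order all_algebra all_field.
Set Implicit Arguments. Unset Strict Implicit. Unset Printing Implicit Defensive.
Import Order.TTheory GRing.Theory Num.Theory.
Local Open Scope ring_scope.

(* Conventions: V_m = 'rV[k]_m, basis vector v_i (1 <= i <= m) is the
   (i-1)-th standard row vector (0-based index i-1 : 'I_m).
   A linear map f on V_m is a matrix A : 'M_m acting by u |-> u *m A. *)

Section Defs.
Variable k : fieldType.

Definition Theta (d m : nat) (u : 'I_d -> 'rV[k]_m) : k :=
  \sum_(t : {ffun 'I_d -> 'I_m})
     (if (\sum_(j < d) (t j).+1)%N == ((d - 1) * m + 1)%N then 1 else 0)
     * \prod_(j < d) u j 0 (t j).

Definition inL (m d : nat) (L : 'M[k]_m) : Prop :=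
  forall u : 'I_d -> 'rV[k]_m,
    \sum_(i < d) Theta (fun j => if j == i then u j *m L else u j) = 0.

Definition Dm (m d : nat) : 'M[k]_m :=
  \matrix_(i < m, j < m)
    (if i == j then ((m.-1)%:Z - (d * (m - i.+1))%:Z)%:~R else 0).

Definition iotamx (n : nat) : 'M[k]_(n, n.+1) :=
  \matrix_(i < n, j < n.+1) (if (i : nat) == (j : nat) then 1 else 0).

Definition pimx (n : nat) : 'M[k]_(n.+1, n) :=
  \matrix_(i < n.+1, j < n) (if (i : nat) == j.+1 then 1 else 0).

(* rho(f) = iota o f o pi ; with row-vector action u |-> u *m A,
   the composite u |-> iota (f (pi u)) is u *m (pimx *m A *m iotamx). *)
Definition rho (n : nat) (A : 'M[k]_n) : 'M[k]_n.+1 :=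
  pimx n *m A *m iotamx n.

End Defs.
Arguments Theta {k} d m u.
Arguments inL {k} m d L.
Arguments Dm {k} m d.
Arguments iotamx {k} n.
Arguments pimx {k} n.
Arguments rho {k} n A.

From HB Require Import structures.
From mathcomp Require Import all_boot all_order all_algebra all_field.
From mathcomp Require Import zify ring.
Import Order.TTheory GRing.Theory Num.Theory.
Local Open Scope ring_scope.
Set Implicit Arguments. Unset Strict Implicit. Unset Printing Implicit Defensive.

(* Expanding Theta multilinearly, L lies in L(m, d) iff for every index tuple t the
   entries L(t_i, t_i + e), where the shift e = (d - 1) m + 1 - sum_j t_j depends only
   on t, sum to zero over i. The tuples (p, q, r, m, ..., m) turn this into a three-term
   relation along each diagonal of L; in characteristic 0 it forces the diagonals above
   the main one to vanish and the main diagonal to be an arithmetic progression that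
   vanishes as soon as its first entry does. As D_(n+1)(v_1) = -(d - 1) n v_1 <> 0,
   subtracting a multiple of D_(n+1) from L in L(n+1, d) leaves a matrix vanishing on
   and above the diagonal, hence of the form rho(A), and the remaining conditions on A
   are exactly those of L(n, d). The dimension follows by induction from L(1, d) = 0. *)

Section DerivationCoefficients.
Variables (k : fieldType) (d m : nat).
Implicit Types (L : 'M[k]_m) (t : {ffun 'I_d -> 'I_m}).

Definition ffun_upd t (i : 'I_d) (x : 'I_m) : {ffun 'I_d -> 'I_m} :=
  [ffun j => if j == i then x else t j].

Definition tuple_weight t : nat := (\sum_(j < d) (t j).+1)%N.

(* [der_coef L t] is sum_i Theta(v_(t 1), ..., L v_(t i), ..., v_(t d)); only the
   column x of row [t i] that restores the weight (d - 1) m + 1 contributes. *)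
Definition der_coef L t : k :=
  \sum_(i < d) \sum_(x < m)
    (if (x + tuple_weight t == t i + ((d - 1) * m + 1))%N then L (t i) x else 0).

Lemma ffun_upd_id t i x : ffun_upd t i x i = x.
Proof. by rewrite ffunE eqxx. Qed.

Lemma ffun_updK t i x : ffun_upd (ffun_upd t i x) i (t i) = t.
Proof. by apply/ffunP => j; rewrite !ffunE; case: eqP => // ->. Qed.

Lemma tuple_weight_upd t i x N :
  (t i + tuple_weight (ffun_upd t i x) == x + N)%N = (tuple_weight t == N).
Proof.
rewrite /tuple_weight (bigD1 i) //= [in RHS](bigD1 i) //= ffun_upd_id.
under eq_bigr => j /negbTE ji do rewrite ffunE ji.
by apply/eqP/eqP; lia.
Qed.

Lemma sum_Theta_der L (u : 'I_d -> 'rV[k]_m) :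
  \sum_(i < d) Theta d m (fun j => if j == i then u j *m L else u j) =
  \sum_(t : {ffun 'I_d -> 'I_m}) (\prod_(j < d) u j 0 (t j)) * der_coef L t.
Proof.
under [RHS]eq_bigr => t _ do rewrite mulr_sumr.
rewrite [RHS]exchange_big /=; apply: eq_bigr => i _.
pose rest t := \prod_(j < d | j != i) u j 0 (t j).
rewrite /Theta.
transitivity (\sum_(t : {ffun 'I_d -> 'I_m}) \sum_(c < m)
  (if tuple_weight t == ((d - 1) * m + 1)%N then 1 else 0) *
  (u i 0 c * L c (t i) * rest t)).
  apply: eq_bigr => t _.
  rewrite [\prod_(j < d) _](bigD1 i) //= eqxx mxE big_distrl /= mulr_sumr; apply: eq_bigr => c _.
  by congr (_ * (_ * _)); apply: eq_bigr => j /negbTE ->.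
(* [(t, c) |-> (t with c at i, t i)] exchanges the two sides *)
pose s (p : {ffun 'I_d -> 'I_m} * 'I_m) := (ffun_upd p.1 i p.2, p.1 i).
have sK : involutive s by case=> t c; rewrite /s /= ffun_updK ffun_upd_id.
under [RHS]eq_bigr => t _ do rewrite mulr_sumr.
rewrite !pair_bigA [RHS](reindex_inj (inv_inj sK)); apply: eq_bigr => -[t x] _ /=.
rewrite (bigD1 i) //= ffun_upd_id.
under eq_bigr => j /negbTE ji do rewrite ffunE ji.
by rewrite tuple_weight_upd /rest; case: ifP => _; rewrite ?mul0r ?mulr0 // mul1r; ring.
Qed.

Lemma inL_der_coefP L : inL m d L <-> forall t, der_coef L t = 0.
Proof.
split=> [hL t | h0 u]; last by rewrite sum_Theta_der big1 // => t _; rewrite h0 mulr0.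
have := hL (fun j => delta_mx 0 (t j)); rewrite sum_Theta_der (bigD1 t) //=.
rewrite big1 ?mul1r => [|j _]; last by rewrite mxE !eqxx.
rewrite big1 ?addr0 // => t' t't.
have /existsP[j tj] : [exists j, t' j != t j].
  by apply: contra_neqT t't => /existsPn eq_t; apply/ffunP => j; move/negPn/eqP: (eq_t j).
by rewrite (bigD1 j) //= mxE (negbTE tj) andbF !mul0r.
Qed.

Lemma der_coefD a L1 L2 t :
  der_coef (a *: L1 + L2) t = a * der_coef L1 t + der_coef L2 t.
Proof.
rewrite /der_coef mulr_sumr -big_split; apply: eq_bigr => i _.
rewrite mulr_sumr -big_split; apply: eq_bigr => x _.
by case: ifP => _; rewrite ?mxE /= ?mulr0 ?addr0.
Qed.

Lemma inL_lin a L1 L2 : inL m d L1 -> inL m d L2 -> inL m d (a *: L1 + L2).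
Proof.
move=> /inL_der_coefP h1 /inL_der_coefP h2; apply/inL_der_coefP => t.
by rewrite der_coefD h1 h2 mulr0 addr0.
Qed.

End DerivationCoefficients.

Section Rho.
Variables (k : fieldType) (n : nat).
Implicit Types (A : 'M[k]_n) (L : 'M[k]_n.+1).

Definition rho_inv L : 'M[k]_n := \matrix_(i, j) L (lift ord0 i) (lift ord_max j).

Lemma rho_row0 A j : rho n A ord0 j = 0.
Proof.
rewrite mxE big1 // => l _; rewrite mxE big1 ?mul0r // => j' _.
by rewrite mxE mul0r.
Qed.

Lemma rho_col_max A i : rho n A i ord_max = 0.
Proof. by rewrite mxE big1 // => l _; rewrite [iotamx n l _]mxE ltn_eqF ?mulr0. Qed.

Lemma rho_lift A i j : rho n A (lift ord0 i) (lift ord_max j) = A i j.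
Proof.
rewrite mxE (bigD1 j) //= big1 ?addr0 => [|l lj]; last first.
  by rewrite [iotamx n l _]mxE lift_max (inj_eq val_inj) (negbTE lj) mulr0.
rewrite [iotamx _ _ _]mxE lift_max eqxx mulr1 mxE (bigD1 i) //= big1 ?addr0 => [|l li].
  by rewrite mxE eqxx mul1r.
by rewrite mxE /= eqSS (inj_eq val_inj) eq_sym (negbTE li) mul0r.
Qed.

Lemma rhoK : cancel (rho n) rho_inv.
Proof. by move=> A; apply/matrixP => i j; rewrite mxE rho_lift. Qed.

Lemma rho_invK L :
  (forall j, L ord0 j = 0) -> (forall i, L i ord_max = 0) -> rho n (rho_inv L) = L.
Proof.
move=> L_row0 L_col_max; apply/matrixP => x y.
have [i ->|->] := unliftP ord0 x; last by rewrite rho_row0.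
have [j ->|->] := unliftP ord_max y; last by rewrite rho_col_max.
by rewrite rho_lift mxE.
Qed.

End Rho.

Lemma mul_subn1_add d m : (0 < d)%N -> ((d - 1) * m + m = d * m)%N.
Proof. by case: d => // d _; rewrite subn1 mulSn addnC. Qed.

Lemma tuple_weight_compl d m (t : {ffun 'I_d -> 'I_m}) :
  (tuple_weight t + \sum_(j < d) (m - (t j).+1) = d * m)%N.
Proof.
rewrite /tuple_weight -big_split /= (eq_bigr (fun=> m)) => [|j _].
  by rewrite sum_nat_const card_ord.
by rewrite subnKC.
Qed.

Section DerivationCoefficientsRho.
Variables (k : fieldType) (d : nat).
Hypothesis d_gt0 : (0 < d)%N.

Lemma der_coef_rho_lift n (A : 'M[k]_n) (t : {ffun 'I_d -> 'I_n}) :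
  der_coef (rho n A) [ffun j => lift ord0 (t j)] = der_coef A t.
Proof.
have weight_lift : tuple_weight [ffun j => lift ord0 (t j)] = (tuple_weight t + d)%N.
  rewrite /tuple_weight -[X in (_ + X)%N]card_ord -sum1_card -big_split /=.
  by apply: eq_bigr => j _; rewrite ffunE lift0 addn1.
rewrite /der_coef weight_lift; apply: eq_bigr => i _; rewrite ffunE.
rewrite (bigD1_ord ord_max) //= rho_col_max if_same add0r; apply: eq_bigr => x _.
rewrite rho_lift /bump leq0n (leqNgt n x) ltn_ord mulnS.
congr (if _ then _ else _); apply/eqP/eqP; have := mul_subn1_add 1 d_gt0; lia.
Qed.

Lemma der_coef_rho_ord0 n (A : 'M[k]_n) (t : {ffun 'I_d -> 'I_n.+1}) r :
  t r = ord0 -> der_coef (rho n A) t = 0.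
Proof.
move=> tr0; apply: big1 => i _.
have [->|ir] := eqVneq i r; first by apply: big1 => x _; rewrite tr0 rho_row0 if_same.
have compl_ge : (n + (n - t i) <= \sum_(j < d) (n.+1 - (t j).+1))%N.
  by rewrite (bigD1 r) //= (bigD1 i) //= tr0 !subSS subn0 addnA leq_addr.
rewrite (bigD1_ord ord_max) //= rho_col_max if_same add0r.
(* an entry of the last column would be needed to balance the weight *)
apply: big1 => x _; rewrite /bump leqNgt ltn_ord add0n; case: eqP => // weight_eq.
have := tuple_weight_compl t; have := mul_subn1_add n.+1 d_gt0.
have := ltn_ord x; have := ltn_ord (t i); lia.
Qed.

Lemma inL_rho n (A : 'M[k]_n) : inL n.+1 d (rho n A) <-> inL n d A.
Proof.
rewrite !inL_der_coefP; split=> [rhoA t | A0 t]; first by rewrite -der_coef_rho_lift.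
have [r /eqP tr0 | t_pos] := pickP (fun j => t j == ord0).
  exact: der_coef_rho_ord0 tr0.
have t_gt0 j : (0 < t j)%N by rewrite lt0n; exact: negbT (t_pos j).
have t'_lt j : ((t j).-1 < n)%N by rewrite -ltnS prednK.
pose t' := [ffun j => Ordinal (t'_lt j)].
have -> : t = [ffun j => lift ord0 (t' j)].
  by apply/ffunP => j; apply/val_inj; rewrite !ffunE /= /bump leq0n add1n prednK.
by rewrite der_coef_rho_lift.
Qed.

Lemma inL_Dm m : inL m d (Dm m d : 'M[k]_m).
Proof.
apply/inL_der_coefP => t; set N := ((d - 1) * m + 1)%N.
have diag i :
    \sum_(x < m) (if (x + tuple_weight t == t i + N)%N then Dm m d (t i) x else 0) =
    if tuple_weight t == N then (m.-1)%:R - (d * (m - (t i).+1))%:R else 0 :> k.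
  rewrite (bigD1 (t i)) //= big1 => [|x xt].
    by rewrite addr0 mxE eqxx eqn_add2l rmorphB.
  by rewrite mxE [t i == x]eq_sym (negbTE xt) if_same.
rewrite /der_coef (eq_bigr _ (fun i _ => diag i)).
case: eqP => [weight_eq|_]; last by rewrite big1.
have compl_eq : (\sum_(i < d) (m - (t i).+1) = m.-1)%N.
  by have := tuple_weight_compl t; have := mul_subn1_add m d_gt0; rewrite weight_eq /N; lia.
by rewrite sumrB -!natr_sum -big_distrr /= compl_eq sum_nat_const card_ord mulnC subrr.
Qed.

End DerivationCoefficientsRho.

Lemma pchar0_natr_mulI (F : fieldType) : [pchar F] =i pred0 ->
  forall n (x : F), (0 < n)%N -> n%:R * x = 0 -> x = 0.
Proof.
by move=> /pcharf0P F0 n x n_gt0 /eqP; rewrite mulf_eq0 F0 gtn_eqF //= => /eqP.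
Qed.

Section ThreeTermRelation.
Variables (k : fieldType) (M c : nat) (f : nat -> nat -> k).
Hypothesis k0 : [pchar k] =i pred0.
Hypothesis f_out : forall x y, (M < y)%N -> f x y = 0.
Hypothesis f_rel : forall p q r e,
  (p <= M)%N -> (q <= M)%N -> (r <= M)%N -> (p + q + r + e = 2 * M)%N ->
  f p (p + e) + f q (q + e) + f r (r + e) + c%:R * f M (M + e) = 0.

Lemma three_term_step e y : (y < M)%N -> (y + e <= M)%N ->
  f y.+1 (y.+1 + e) = f y (y + e) + (f M (M + e) - f M.-1 (M.-1 + e)).
Proof.
move=> y_lt ye_le.
have rel1 := f_rel (p := y) (q := M) (r := M - e - y) (e := e)
  ltac:(lia) ltac:(lia) ltac:(lia) ltac:(lia).
have rel2 := f_rel (p := y.+1) (q := M.-1) (r := M - e - y) (e := e)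
  ltac:(lia) ltac:(lia) ltac:(lia) ltac:(lia).
by rewrite -[LHS]addr0 -rel1 -[RHS]addr0 -rel2; ring.
Qed.

Lemma three_term_arith e y : (y <= M)%N -> (y + e <= M.+1)%N ->
  f y (y + e) = f 0 e + y%:R * (f M (M + e) - f M.-1 (M.-1 + e)).
Proof.
elim: y => [|y IHy] y_le ye_le; first by rewrite mul0r addr0.
by rewrite three_term_step ?IHy ?mulrSr; [ring | lia ..].
Qed.

Lemma three_term_upper0 e x : (0 < e)%N -> (x + e <= M)%N -> f x (x + e) = 0.
Proof.
move=> e_gt0 xe_le; set delta := f M (M + e) - f M.-1 (M.-1 + e).
have arith y : (y <= M)%N -> (y + e <= M.+1)%N -> f y (y + e) = f 0 e + y%:R * delta.
  exact: three_term_arith.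
have past_end : f 0 e + (M - e).+1%:R * delta = 0.
  by rewrite -arith ?f_out //; lia.
have rel_end : f 0 e + (f 0 e + (M - e)%:R * delta) = 0.
  have rel := f_rel (p := 0) (q := M) (r := M - e) (e := e)
    ltac:(lia) ltac:(lia) ltac:(lia) ltac:(lia).
  have fM : f M (M + e) = 0 by apply: f_out; lia.
  by rewrite add0n fM mulr0 !addr0 in rel; rewrite -arith //; lia.
have delta0 : delta = 0.
  apply: (pchar0_natr_mulI k0 (n := (M - e).+2)) => //.
  transitivity (2 * (f 0 e + (M - e).+1%:R * delta) - (f 0 e + (f 0 e + (M - e)%:R * delta))).
    by rewrite -!natr1; ring.
  by rewrite past_end rel_end subr0 mulr0.
have g0 : f 0 e = 0 by rewrite -past_end delta0 mulr0 addr0.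
by rewrite arith ?g0 ?delta0 ?mulr0 ?addr0 //; lia.
Qed.

Lemma three_term_diag0 x : f 0 0 = 0 -> (x <= M)%N -> f x x = 0.
Proof.
move=> f00 x_le; set delta := f M (M + 0) - f M.-1 (M.-1 + 0).
have arith y : (y <= M)%N -> f y y = y%:R * delta.
  by move=> y_le; rewrite -{2}(addn0 y) three_term_arith ?f00 ?add0r //; lia.
have [M0 | M_gt0] := posnP M; first by move: x_le; rewrite M0 leqn0 => /eqP ->.
have fMM : f M M = 0.
  apply: (pchar0_natr_mulI k0 (n := c.+2)) => //.
  have rel := f_rel (p := 0) (q := M) (r := M) (e := 0)
    ltac:(lia) ltac:(lia) ltac:(lia) ltac:(lia).
  by rewrite !addn0 f00 add0r in rel; rewrite -[RHS]rel -!natr1; ring.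
have delta0 : delta = 0 by apply: (pchar0_natr_mulI k0 M_gt0); rewrite -arith.
by rewrite arith // delta0 mulr0.
Qed.

End ThreeTermRelation.

Section ThreeTermMatrix.
Variables (k : fieldType) (M c : nat).
Hypothesis k0 : [pchar k] =i pred0.
Implicit Types (L : 'M[k]_M.+1).

Definition nat_entry L (x y : nat) : k :=
  if ((x <= M) && (y <= M))%N then L (inord x) (inord y) else 0.

Lemma nat_entry_out L x y : (M < y)%N -> nat_entry L x y = 0.
Proof. by move=> y_gt; rewrite /nat_entry (leqNgt y) y_gt andbF. Qed.

Lemma nat_entry_ord L (i j : 'I_M.+1) : nat_entry L i j = L i j.
Proof. by rewrite /nat_entry !leq_ord !inord_val. Qed.

Lemma sum_row_shift L y W N e : (y <= M)%N -> (W + e = N)%N ->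
  \sum_(x < M.+1) (if (x + W == y + N)%N then L (inord y) x else 0) =
  nat_entry L y (y + e).
Proof.
move=> y_le WeN; rewrite /nat_entry y_le /=.
have [ye_le | ye_gt] := leqP (y + e) M.
  rewrite (bigD1 (inord (y + e))) //= inordK // ifT; last by apply/eqP; lia.
  rewrite big1 ?addr0 // => x x_ne; rewrite ifN //; apply: contra x_ne => /eqP xWyN.
  by apply/eqP/val_inj; rewrite /= inordK //; lia.
by rewrite big1 // => x _; rewrite ifN //; apply/eqP; have := ltn_ord x; lia.
Qed.

Lemma inL_three_term L : inL M.+1 c.+3 L -> forall p q r e,
  (p <= M)%N -> (q <= M)%N -> (r <= M)%N -> (p + q + r + e = 2 * M)%N ->
  nat_entry L p (p + e) + nat_entry L q (q + e) + nat_entry L r (r + e)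
    + c%:R * nat_entry L M (M + e) = 0.
Proof.
move=> /inL_der_coefP L0 p q r e p_le q_le r_le pqre.
(* the index tuple (p, q, r, M, ..., M) *)
pose t := [ffun j : 'I_c.+3 => inord (nth M [:: p; q; r] j) : 'I_M.+1].
have t_le j : (nth M [:: p; q; r] j <= M)%N.
  by case: j => [|[|[|j]]] //=; rewrite nth_nil.
have weight_t : tuple_weight t = (p + q + r + 3 + c * M.+1)%N.
  rewrite /tuple_weight !big_ord_recl (eq_bigr (fun=> M.+1)) => [|j _].
    by rewrite sum_nat_const card_ord !ffunE /= !inordK //; lia.
  by rewrite ffunE !lift0 /= nth_nil inordK.
have coef_t : der_coef L t =
    \sum_(j < c.+3) nat_entry L (nth M [:: p; q; r] j) (nth M [:: p; q; r] j + e).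
  apply: eq_bigr => j _; rewrite ffunE inordK ?ltnS ?t_le //.
  rewrite (@sum_row_shift L _ _ _ e) ?t_le //.
  by rewrite weight_t subn1 !mulSn; lia.
rewrite -(L0 t) coef_t !big_ord_recl (eq_bigr (fun=> nat_entry L M (M + e))) => [|j _].
  by rewrite sumr_const card_ord mulr_natl !addrA.
by rewrite !lift0 /= nth_nil.
Qed.

Lemma inL_upper0 L : inL M.+1 c.+3 L -> forall i j : 'I_M.+1, (i < j)%N -> L i j = 0.
Proof.
move=> /inL_three_term L_rel i j ij; rewrite -nat_entry_ord -(subnKC (ltnW ij)).
apply: (three_term_upper0 k0 (@nat_entry_out L) L_rel); first by rewrite subn_gt0.
by rewrite subnKC ?leq_ord // ltnW.
Qed.

Lemma inL_diag0 L : inL M.+1 c.+3 L -> L ord0 ord0 = 0 -> forall i, L i i = 0.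
Proof.
move=> /inL_three_term L_rel L00 i; rewrite -nat_entry_ord.
by apply: (three_term_diag0 k0 L_rel); rewrite ?leq_ord // (nat_entry_ord L ord0 ord0).
Qed.

End ThreeTermMatrix.

Lemma Dm00_neq0 (k : fieldType) n d : [pchar k] =i pred0 -> (0 < n)%N -> (1 < d)%N ->
  Dm n.+1 d ord0 ord0 != 0 :> k.
Proof.
move=> /pcharf0P k0 n_gt0 d_gt1.
rewrite mxE eqxx subSS subn0 /= rmorphB /= -!pmulrn.
rewrite -(mul_subn1_add n (ltnW d_gt1)) natrD opprD addrA addrAC subrr add0r oppr_eq0.
by rewrite k0 muln_eq0 negb_or -!lt0n subn_gt0 d_gt1.
Qed.

Lemma rho_Dm_direct (k : fieldType) n d (A : 'M[k]_n) a :
  [pchar k] =i pred0 -> (0 < n)%N -> (1 < d)%N ->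
  rho n A + a *: Dm n.+1 d = 0 -> rho n A = 0 /\ a = 0.
Proof.
move=> k0 n_gt0 d_gt1 sum0; suff a0 : a = 0 by move: sum0; rewrite a0 scale0r addr0.
move/matrixP/(_ ord0 ord0)/eqP: sum0.
rewrite mxE rho_row0 add0r mxE [X in _ == X]mxE mulf_eq0.
by rewrite (negbTE (Dm00_neq0 k0 n_gt0 d_gt1)) orbF => /eqP.
Qed.

Lemma inL1_eq0 (k : fieldType) d (L : 'M[k]_1) :
  [pchar k] =i pred0 -> (0 < d)%N -> inL 1 d L -> L = 0.
Proof.
move=> k0 d_gt0 /inL_der_coefP/(_ [ffun=> ord0]); rewrite /der_coef.
have weight0 : tuple_weight ([ffun=> ord0] : {ffun 'I_d -> 'I_1}) = d.
  rewrite /tuple_weight (eq_bigr (fun=> 1%N)) => [|j _]; last by rewrite ffunE.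
  by rewrite sum_nat_const card_ord muln1.
rewrite (eq_bigr (fun=> L ord0 ord0)) => [|i _]; last first.
  by rewrite big_ord1 !ffunE weight0 muln1 subnK // eqxx.
rewrite sumr_const card_ord -mulr_natl => /(pchar0_natr_mulI k0 d_gt0) L00.
by apply/matrixP => i j; rewrite !ord1 mxE.
Qed.

Section Decomposition.
Variables (k : fieldType) (d' : nat).
Hypothesis k0 : [pchar k] =i pred0.
Local Notation d := d'.+3.

Lemma inL_decomposition n (L : 'M[k]_n.+1) : (0 < n)%N ->
  inL n.+1 d L <-> exists (A : 'M[k]_n) (a : k), inL n d A /\ L = rho n A + a *: Dm n.+1 d.
Proof.
move=> n_gt0; split=> [L_in | [A [a [A_in ->]]]]; last first.
  by rewrite addrC; apply: inL_lin; [exact: inL_Dm | exact/inL_rho].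
set D := Dm n.+1 d : 'M[k]_n.+1.
have D00 : D ord0 ord0 != 0 by apply: Dm00_neq0.
pose a := L ord0 ord0 / D ord0 ord0; pose L' := (- a) *: D + L.
have L'_in : inL n.+1 d L' by apply: inL_lin => //; exact: inL_Dm.
have L'00 : L' ord0 ord0 = 0.
  by rewrite mxE [X in X + _]mxE mulNr divfK // addNr.
have L'_upper (i j : 'I_n.+1) : (i <= j)%N -> L' i j = 0.
  rewrite leq_eqVlt => /orP[/eqP/val_inj -> | ij]; first exact: inL_diag0.
  exact: inL_upper0.
have L'_rho : rho n (rho_inv L') = L'.
  by apply: rho_invK => [j | i]; apply: L'_upper; rewrite ?leq_ord.
exists (rho_inv L'), a; split; first by move: L'_in; rewrite -{1}L'_rho inL_rho.
by rewrite L'_rho /L' addrAC -scalerDl addNr scale0r add0r.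
Qed.

Lemma dim_inL n : (0 < n)%N -> exists U : {vspace 'M[k]_n},
  (forall L, L \in U <-> inL n d L) /\ \dim U = (n - 1)%N.
Proof.
elim: n => [//|n IHn] _; have [-> | n_gt0] := posnP n.
  exists 0%VS; split=> [L|]; last by rewrite dimv0.
  rewrite memv0; split=> [/eqP -> | /inL1_eq0 -> //].
  by apply/inL_der_coefP => t; apply: big1 => i _; apply: big1 => x _; rewrite mxE if_same.
have [U [memU dimU]] := IHn n_gt0; set D := Dm n.+1 d : 'M[k]_n.+1.
pose f : 'Hom('M[k]_n, 'M[k]_n.+1) :=
  (linfun (mulmxr (iotamx n)) \o linfun (mulmx (pimx n)))%VF.
have fE A : f A = rho n A by rewrite comp_lfunE !lfunE.
exists (f @: U + <[D]>)%VS; split=> [L|].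
  rewrite inL_decomposition //; split.
    move=> /memv_addP[_ /memv_imgP[A A_U ->] [_ /vlineP[a ->] ->]].
    by exists A, a; rewrite fE -memU.
  by move=> [A [a [/memU A_U ->]]]; rewrite -fE memv_add ?memv_img ?memvZ ?memv_line.
have D_neq0 : D != 0.
  by apply: contraNneq (Dm00_neq0 k0 n_gt0 (isT : (1 < d)%N)) => D0; rewrite -/D D0 mxE.
rewrite dimv_disjoint_sum.
  rewrite limg_dim_eq ?dimU ?dim_vline ?D_neq0; first by rewrite /= !subn1 addn1 prednK.
  apply/eqP; rewrite -subv0; apply/subvP => A; rewrite memv_cap memv_ker memv0 fE.
  case/andP => _ /eqP rhoA0; rewrite -[A]rhoK rhoA0.
  by apply/eqP/matrixP => i j; rewrite !mxE.
apply/eqP; rewrite -subv0; apply/subvP => L; rewrite memv_cap memv0.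
case/andP => /memv_imgP[A _ ->] /vlineP[a]; rewrite fE => rhoA.
have := @rho_Dm_direct _ _ d A (- a) k0 n_gt0 isT.
by rewrite rhoA scaleNr subrr => /(_ erefl)[-> _].
Qed.

End Decomposition.

Unset Implicit Arguments.
Theorem theorem3p11 (k : closedFieldType) (hchar : [pchar k] =i pred0)
  (d : nat) (hd : (3 <= d)%N) (n : nat) (hn : (2 <= n)%N) :
  (* L(n+1,d) = rho(L(n,d)) + k D_{n+1} *)
  (forall L : 'M[k]_n.+1,
      inL n.+1 d L <-> exists (A : 'M[k]_n) (c : k), inL n d A /\ L = rho n A + c *: Dm n.+1 d)
  (* the sum is direct *)
  /\ (forall (A : 'M[k]_n) (c : k),
        inL n d A -> rho n A + c *: Dm n.+1 d = 0 -> rho n A = 0 /\ c = 0)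
  (* dim_k L(n,d) = n - 1 *)
  /\ (exists U : {vspace 'M[k]_n},
        (forall L : 'M[k]_n, L \in U <-> inL n d L) /\ \dim U = (n - 1)%N).
Proof.
case: d hd => [|[|[|d']]] // _; have n_gt0 : (0 < n)%N := ltnW hn.
split; first by move=> L; apply: inL_decomposition.
split; first by move=> A c _; apply: rho_Dm_direct.
exact: dim_inL.
Qed.
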